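(* Let $\Omega$ be a nonempty set, $\mathcal A$ an algebra on $\Omega$, and $\mathcal X_{\mathcal A}$ the set of bounded $\mathcal A$-measurable functions $\Omega\to\mathbb R$ (constants $c\in\mathbb R$ are identified with constant functions). Let $\preceq$ be a total preorder on $\mathcal X_{\mathcal A}$ that is increasing, i.e. $0\prec 1$, and that can be numerically represented, i.e. there exists $\mathcal R:\mathcal X_{\mathcal A}\to\mathbb R$ with $X\preceq Y$ if and only if $\mathcal R(X)\le\mathcal R(Y)$. Then the following are equivalent: (i) for all $X,Y\in\mathcal X_{\mathcal A}$ and all increasing continuous $\phi:\mathbb R\to\mathbb R$, $X\preceq Y$ implies $\phi(X)\preceq\phi(Y)$; (ii) there exists a numerical representation $\mathcal R$ of $\preceq$ satisfying ordinality, i.e. $\mathcal R(\phi\circ X)=\phi(\mathcal R(X))$ for all $X\in\mathcal X_{\mathcal A}$ and all increasing continuous $\phi:\mathbb R\to\mathbb R$.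
   Context: A total preorder is a transitive and complete binary relation; $\prec$ denotes its strict part. A function $X$ is $\mathcal A$-measurable if $\{X>x\}\in\mathcal A$ and $\{X\ge x\}\in\mathcal A$ for all $x\in\mathbb R$. ''Increasing'' means non-strictly increasing. *)

From Stdlib Require Import Reals.
Open Scope R_scope.

Definition is_algebra {Omega : Type} (A : (Omega -> Prop) -> Prop) : Prop :=
  A (fun _ => True) /\
  (forall S, A S -> A (fun w => ~ S w)) /\
  (forall S T, A S -> A T -> A (fun w => S w \/ T w)).

Definition A_measurable {Omega : Type} (A : (Omega -> Prop) -> Prop)
  (X : Omega -> R) : Prop :=
  forall x : R, A (fun w => X w > x) /\ A (fun w => X w >= x).

Definition bounded_fun {Omega : Type} (X : Omega -> R) : Prop :=
  exists M : R, forall w, Rabs (X w) <= M.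

Definition XA {Omega : Type} (A : (Omega -> Prop) -> Prop) (X : Omega -> R) : Prop :=
  A_measurable A X /\ bounded_fun X.

Definition cst {Omega : Type} (c : R) : Omega -> R := fun _ => c.

Definition total_preorder_on {Omega : Type} (A : (Omega -> Prop) -> Prop)
  (le : (Omega -> R) -> (Omega -> R) -> Prop) : Prop :=
  (forall X Y Z, XA A X -> XA A Y -> XA A Z -> le X Y -> le Y Z -> le X Z) /\
  (forall X Y, XA A X -> XA A Y -> le X Y \/ le Y X).

Definition strict {T : Type} (le : T -> T -> Prop) (X Y : T) : Prop :=
  le X Y /\ ~ le Y X.

Definition num_rep {Omega : Type} (A : (Omega -> Prop) -> Prop)
  (le : (Omega -> R) -> (Omega -> R) -> Prop) (Rep : (Omega -> R) -> R) : Prop :=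
  forall X Y, XA A X -> XA A Y -> (le X Y <-> Rep X <= Rep Y).

Definition incr_cont (phi : R -> R) : Prop :=
  (forall x y, x <= y -> phi x <= phi y) /\ continuity phi.

(* For (i) => (ii), invariance under increasing affine maps
   makes the constants strictly increasing, and invariance under the shifts x |-> x + t
   makes every X equivalent to a constant: if s is the supremum of the constants below X
   and X is, say, strictly below s, then for t < t' the values of the representation
   satisfy R(X + t) < R(s + t) <= R(X + t'), so the open intervals (R(X + t), R(s + t))
   are pairwise disjoint for t real; each contains a rational, which is impossible.
   The certainty equivalent X |-> c(X) is then a representation, and it is ordinal
   because X ~ c(X) gives phi(X) ~ phi(c(X)). *)

From Stdlib Require Import Reals Lra Lia Classical FunctionalExtensionality
  PropExtensionality ClassicalEpsilon Cantor.
Open Scope R_scope.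

Definition trisect (u : nat -> R) (n : nat) (I : R * R) : R * R :=
  let (a, b) := I in
  if Rle_dec (u n) ((a + b) / 2) then (b - (b - a) / 3, b) else (a, a + (b - a) / 3).

Fixpoint avoiding_interval (u : nat -> R) (n : nat) : R * R :=
  match n with
  | O => (0, 1)
  | S m => trisect u m (avoiding_interval u m)
  end.

Lemma trisect_spec u n a b : a < b ->
  let I := trisect u n (a, b) in
  fst I < snd I /\ a <= fst I /\ snd I <= b /\
  (forall y, fst I <= y <= snd I -> y <> u n).
Proof.
  intros Hab; unfold trisect.
  destruct (Rle_dec (u n) ((a + b) / 2)); simpl; repeat split; intros; lra.
Qed.

Lemma avoiding_interval_nonempty u n :
  fst (avoiding_interval u n) < snd (avoiding_interval u n).
Proof.
  induction n as [|n IH]; simpl; [lra|].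
  destruct (avoiding_interval u n) as [a b].
  exact (proj1 (trisect_spec u n a b IH)).
Qed.

Lemma avoiding_interval_step u n :
  let I := avoiding_interval u n in
  let J := avoiding_interval u (S n) in
  fst I <= fst J /\ snd J <= snd I /\ (forall y, fst J <= y <= snd J -> y <> u n).
Proof.
  simpl; pose proof (avoiding_interval_nonempty u n) as H.
  destruct (avoiding_interval u n) as [a b].
  exact (proj2 (trisect_spec u n a b H)).
Qed.

Lemma avoiding_interval_nested u n m :
  fst (avoiding_interval u n) <= snd (avoiding_interval u m).
Proof.
  set (a k := fst (avoiding_interval u k)); set (b k := snd (avoiding_interval u k)).
  assert (Ha : Un_growing a) by (intros k; apply (avoiding_interval_step u k)).
  assert (Hb : Un_decreasing b) by (intros k; apply (avoiding_interval_step u k)).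
  pose proof (growing_prop a (Nat.max n m) n Ha (Nat.le_max_l n m)).
  pose proof (decreasing_prop b m (Nat.max n m) Hb (Nat.le_max_r n m)).
  pose proof (avoiding_interval_nonempty u (Nat.max n m)).
  unfold a, b in *; lra.
Qed.

Lemma R_not_enumerable (u : nat -> R) : exists x, forall n, u n <> x.
Proof.
  set (E y := exists n, y = fst (avoiding_interval u n)).
  assert (HE : bound E).
  { exists (snd (avoiding_interval u 0)); intros y [n ->].
    apply avoiding_interval_nested. }
  destruct (completeness E HE (ex_intro _ _ (ex_intro _ 0%nat eq_refl)))
    as [x [Hub Hlub]].
  exists x; intros n Hn.
  apply (proj2 (proj2 (avoiding_interval_step u n)) x); [split | auto].
  - apply Hub; exists (S n); reflexivity.
  - apply Hlub; intros y [m ->]; apply avoiding_interval_nested.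
Qed.

Definition rat_enum (m : nat) : R :=
  let (n, m') := of_nat m in let (a, b) := of_nat m' in (INR a - INR b) / INR (S n).

Lemma rat_enum_dense a b : a < b -> exists m, a < rat_enum m < b.
Proof.
  intros Hab.
  destruct (archimed_cor1 (b - a)) as [N [HN HN0]]; [lra|].
  assert (HNpos : 0 < INR N) by (apply lt_0_INR; lia).
  assert (Hgap : 1 < (b - a) * INR N).
  { apply (Rmult_lt_compat_r (INR N)) in HN; auto.
    rewrite Rinv_l in HN; lra. }
  set (k := up (a * INR N)).
  destruct (archimed (a * INR N)) as [Hk1 Hk2]; fold k in Hk1, Hk2.
  exists (to_nat (pred N, to_nat (Z.to_nat k, Z.to_nat (- k)))).
  unfold rat_enum; rewrite !cancel_of_to.
  replace (S (pred N)) with N by lia.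
  replace (INR (Z.to_nat k) - INR (Z.to_nat (- k))) with (IZR k)
    by (rewrite !INR_IZR_INZ, <- minus_IZR; f_equal; lia).
  split; apply (Rmult_lt_reg_r (INR N)); auto;
    unfold Rdiv; rewrite Rmult_assoc, Rinv_l; lra.
Qed.

Lemma no_R_indexed_disjoint_intervals (f g : R -> R) :
  (forall t, f t < g t) -> (forall t t', t < t' -> g t <= f t') -> False.
Proof.
  intros Hfg Hsep.
  set (u m := epsilon (inhabits 0) (fun t => f t < rat_enum m < g t)).
  destruct (R_not_enumerable u) as [x Hx].
  destruct (rat_enum_dense (f x) (g x) (Hfg x)) as [m Hm].
  assert (Hu : f (u m) < rat_enum m < g (u m))
    by (apply (epsilon_spec (inhabits 0) (fun t => f t < rat_enum m < g t)); eauto).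
  apply (Hx m).
  destruct (Rtotal_order (u m) x) as [H|[H|H]]; auto;
    specialize (Hsep _ _ H); lra.
Qed.

Definition upward_closed (S : R -> Prop) : Prop := forall x y, x <= y -> S x -> S y.

Lemma upward_closed_cases S : upward_closed S ->
  (forall t, S t) \/ (forall t, ~ S t) \/
  exists a, (forall t, S t <-> t > a) \/ (forall t, S t <-> t >= a).
Proof.
  intros HS.
  destruct (classic (exists t, ~ S t)) as [[t1 Ht1]|Hfull];
    [| left; intros t; apply NNPP; eauto].
  destruct (classic (exists t, S t)) as [[t0 Ht0]|Hempty];
    [| right; left; eauto].
  right; right.
  set (E t := ~ S t).
  assert (Hub : forall t, S t -> is_upper_bound E t).
  { intros t Ht s Hs; destruct (Rle_lt_dec s t) as [|Hts]; auto.
    exfalso; apply Hs, (HS t); auto; lra. }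
  destruct (completeness E (ex_intro _ t0 (Hub t0 Ht0)) (ex_intro _ t1 Ht1))
    as [a [Ha Hlub]].
  assert (Habove : forall t, t > a -> S t)
    by (intros t Ht; apply NNPP; intros Hn; specialize (Ha t Hn); lra).
  assert (Hbelow : forall t, S t -> a <= t) by (intros t Ht; apply Hlub, Hub, Ht).
  exists a; destruct (classic (S a)) as [Hsa|Hsa]; [right | left]; intros t; split.
  - intros Ht; apply Rle_ge, Hbelow, Ht.
  - intros Ht; apply (HS a); auto; lra.
  - intros Ht; destruct (Req_dec t a) as [->|]; [tauto |].
    pose proof (Hbelow t Ht); lra.
  - apply Habove.
Qed.

Lemma Rabs_le_inv x M : Rabs x <= M -> - M <= x <= M.
Proof. unfold Rabs; destruct (Rcase_abs x); lra. Qed.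

Section Algebra.
Context {Omega : Type} (A : (Omega -> Prop) -> Prop) (HA : is_algebra A).

Lemma algebra_ext (P Q : Omega -> Prop) : (forall w, P w <-> Q w) -> A P -> A Q.
Proof.
  intros HPQ; replace Q with P; auto.
  apply functional_extensionality; intros w; apply propositional_extensionality, HPQ.
Qed.

Lemma algebra_const (P : Prop) : A (fun _ => P).
Proof.
  destruct HA as [Hfull [Hcompl _]].
  destruct (classic P) as [H|H].
  - apply (algebra_ext (fun _ => True)); tauto.
  - apply (algebra_ext (fun _ => ~ True)); auto; tauto.
Qed.

Lemma measurable_preimage_upward_closed X S :
  A_measurable A X -> upward_closed S -> A (fun w => S (X w)).
Proof.
  intros HX HS.
  destruct (upward_closed_cases S HS) as [H|[H|[a [H|H]]]].
  - apply (algebra_ext (fun _ => True)); [firstorder | apply algebra_const].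
  - apply (algebra_ext (fun _ => False)); [firstorder | apply algebra_const].
  - apply (algebra_ext (fun w => X w > a)); [firstorder | apply HX].
  - apply (algebra_ext (fun w => X w >= a)); [firstorder | apply HX].
Qed.

Lemma XA_cst c : XA A (cst c).
Proof.
  split; [intros x; split; [exact (algebra_const (c > x)) | exact (algebra_const (c >= x))] |].
  exists (Rabs c); intros; apply Rle_refl.
Qed.

Lemma XA_comp_increasing X phi : (forall x y, x <= y -> phi x <= phi y) ->
  XA A X -> XA A (fun w => phi (X w)).
Proof.
  intros Hphi [HX [M HM]]; split.
  - intros x; split;
      [apply (measurable_preimage_upward_closed X (fun t => phi t > x))
      |apply (measurable_preimage_upward_closed X (fun t => phi t >= x))];
      auto; intros s t Hst Hs; specialize (Hphi s t Hst); lra.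
  - exists (Rabs (phi (- M)) + Rabs (phi M)); intros w.
    destruct (Rabs_le_inv _ _ (HM w)).
    pose proof (Hphi (- M) (X w) ltac:(lra)); pose proof (Hphi (X w) M ltac:(lra)).
    pose proof (Rle_abs (phi M)); pose proof (Rle_abs (- phi (- M))).
    pose proof (Rabs_pos (phi M)); pose proof (Rabs_pos (phi (- M))).
    rewrite Rabs_Ropp in *; apply Rabs_le; lra.
Qed.

End Algebra.

Lemma incr_cont_affine c k : 0 <= k -> incr_cont (fun t => c + k * t).
Proof.
  intros Hk; split; [intros x y Hxy; apply Rplus_le_compat_l, Rmult_le_compat_l; auto | reg].
Qed.

Lemma incr_cont_shift t : incr_cont (fun x => x + t).
Proof. split; [intros; lra | reg]. Qed.

Lemma incr_cont_Rmax_r M : incr_cont (fun x => Rmax x M).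
Proof.
  split; [intros x y Hxy; unfold Rmax; destruct Rle_dec, Rle_dec; lra |].
  replace (fun x => Rmax x M) with (fun x => (x + M + Rabs (x - M)) / 2); [reg |].
  apply functional_extensionality; intros x.
  unfold Rmax, Rabs; destruct Rle_dec, Rcase_abs; lra.
Qed.

Lemma incr_cont_Rmin_r M : incr_cont (fun x => Rmin x M).
Proof.
  split; [intros x y Hxy; unfold Rmin; destruct Rle_dec, Rle_dec; lra |].
  replace (fun x => Rmin x M) with (fun x => (x + M - Rabs (x - M)) / 2); [reg |].
  apply functional_extensionality; intros x.
  unfold Rmin, Rabs; destruct Rle_dec, Rcase_abs; lra.
Qed.

#[local] Hint Resolve XA_cst : core.

Section CertaintyEquivalent.
Context {Omega : Type} (A : (Omega -> Prop) -> Prop) (HA : is_algebra A)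
  (le : (Omega -> R) -> (Omega -> R) -> Prop) (r : (Omega -> R) -> R).
Hypothesis Hr : num_rep A le r.
Hypothesis H01 : strict le (cst 0) (cst 1).
Hypothesis Hinv : forall X Y : Omega -> R, XA A X -> XA A Y ->
  forall phi : R -> R, incr_cont phi ->
    le X Y -> le (fun w => phi (X w)) (fun w => phi (Y w)).

Lemma le_cst_comp phi x y :
  incr_cont phi -> le (cst x) (cst y) -> le (cst (phi x)) (cst (phi y)).
Proof. intros Hphi; exact (Hinv _ _ (XA_cst A HA x) (XA_cst A HA y) phi Hphi). Qed.

Lemma r_cst_lt a b : a < b -> r (cst a) < r (cst b).
Proof.
  intros Hab; destruct H01 as [_ Hnle10].
  destruct (Rlt_or_le (r (cst a)) (r (cst b))) as [|Hba]; auto; exfalso.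
  apply Hnle10.
  apply Hr in Hba; auto.
  apply (le_cst_comp (fun t => - a / (b - a) + / (b - a) * t)) in Hba.
  - replace (- a / (b - a) + / (b - a) * b) with 1 in Hba by (field; lra).
    replace (- a / (b - a) + / (b - a) * a) with 0 in Hba by (field; lra).
    exact Hba.
  - apply incr_cont_affine, Rlt_le, Rinv_0_lt_compat; lra.
Qed.

Lemma r_cst_le_iff a b : r (cst a) <= r (cst b) <-> a <= b.
Proof.
  split; intros H.
  - destruct (Rlt_or_le b a) as [Hba|]; auto.
    pose proof (r_cst_lt b a Hba); lra.
  - destruct H as [H| ->]; [apply Rlt_le, r_cst_lt, H | apply Rle_refl].
Qed.

Lemma r_cst_inj a b : r (cst a) = r (cst b) -> a = b.
Proof.
  intros H; apply Rle_antisym; apply r_cst_le_iff; rewrite H; apply Rle_refl.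
Qed.

Definition shift (X : Omega -> R) (t : R) : Omega -> R := fun w => X w + t.

Lemma XA_shift X t : XA A X -> XA A (shift X t).
Proof. apply (XA_comp_increasing A HA X (fun x => x + t)); intros; lra. Qed.

Lemma shiftK X t : shift (shift X t) (- t) = X.
Proof. apply functional_extensionality; intros w; unfold shift; ring. Qed.

Lemma r_shift_le X Y t : XA A X -> XA A Y ->
  r X <= r Y -> r (shift X t) <= r (shift Y t).
Proof.
  intros HX HY HXY; apply Hr; try apply XA_shift; auto.
  apply (Hinv X Y HX HY _ (incr_cont_shift t)), Hr; auto.
Qed.

Lemma r_shift_lt X Y t : XA A X -> XA A Y ->
  r X < r Y -> r (shift X t) < r (shift Y t).
Proof.
  intros HX HY HXY.
  destruct (Rlt_or_le (r (shift X t)) (r (shift Y t))) as [|HYX]; auto.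
  apply (r_shift_le _ _ (- t)) in HYX; try apply XA_shift; auto.
  rewrite !shiftK in HYX; lra.
Qed.

Lemma no_shift_gap X Y : XA A X -> XA A Y -> r X < r Y ->
  ~ (forall t t', t < t' -> r (shift Y t) <= r (shift X t')).
Proof.
  intros HX HY HXY Hsep.
  apply (no_R_indexed_disjoint_intervals (fun t => r (shift X t)) (fun t => r (shift Y t))).
  - intros t; apply r_shift_lt; auto.
  - exact Hsep.
Qed.

Lemma r_lt_cst_of_upper_bound X M c :
  XA A X -> (forall w, X w <= M) -> M < c -> r X < r (cst c).
Proof.
  intros HX HXM HMc.
  destruct (Rlt_or_le (r X) (r (cst c))) as [|HcX]; auto; exfalso.
  apply Hr in HcX; auto.
  apply (Hinv _ _ (XA_cst A HA c) HX _ (incr_cont_Rmax_r M)) in HcX.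
  replace (fun w => Rmax (X w) M) with (@cst Omega M) in HcX
    by (apply functional_extensionality; intros w; symmetry; apply Rmax_right, HXM).
  change (le (cst (Rmax c M)) (cst M)) in HcX.
  rewrite Rmax_left in HcX by lra.
  apply Hr in HcX; auto.
  pose proof (r_cst_lt M c HMc); lra.
Qed.

Lemma r_cst_lt_of_lower_bound X M c :
  XA A X -> (forall w, M <= X w) -> c < M -> r (cst c) < r X.
Proof.
  intros HX HXM HcM.
  destruct (Rlt_or_le (r (cst c)) (r X)) as [|HXc]; auto; exfalso.
  apply Hr in HXc; auto.
  apply (Hinv _ _ HX (XA_cst A HA c) _ (incr_cont_Rmin_r M)) in HXc.
  replace (fun w => Rmin (X w) M) with (@cst Omega M) in HXc
    by (apply functional_extensionality; intros w; symmetry; apply Rmin_right, HXM).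
  change (le (cst M) (cst (Rmin c M))) in HXc.
  rewrite Rmin_left in HXc by lra.
  apply Hr in HXc; auto.
  pose proof (r_cst_lt c M HcM); lra.
Qed.

Lemma constants_below_bounded X : XA A X ->
  exists m M, r (cst m) <= r X /\ forall c, r (cst c) <= r X -> c <= M.
Proof.
  intros HX; pose proof HX as [_ [M HM]].
  assert (HXM : forall w, - M <= X w <= M) by (intros w; apply Rabs_le_inv, HM).
  exists (- M - 1), M; split.
  - apply Rlt_le, (r_cst_lt_of_lower_bound X (- M)); auto; [| lra].
    intros w; apply HXM.
  - intros c Hc; destruct (Rlt_or_le M c) as [HMc|]; auto.
    pose proof (r_lt_cst_of_upper_bound X M c HX (fun w => proj2 (HXM w)) HMc); lra.
Qed.

Lemma certainty_equivalent X : XA A X -> exists c, r X = r (cst c).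
Proof.
  intros HX; destruct (constants_below_bounded X HX) as (m & M & Hm & HM).
  set (S c := r (cst c) <= r X).
  destruct (completeness S (ex_intro _ M HM) (ex_intro _ m Hm)) as [s [Hs Hslub]].
  exists s.
  destruct (Rtotal_order (r X) (r (cst s))) as [Hlt|[|Hgt]]; auto; exfalso.
  - apply (no_shift_gap X (cst s)); auto; intros t t' Htt'.
    assert (Hbelow : S (s + t - t')).
    { apply NNPP; intros Hn.
      assert (Hub : is_upper_bound S (s + t - t')).
      { intros d Hd; destruct (Rlt_or_le (s + t - t') d) as [Hd'|]; auto.
        exfalso; apply Hn; unfold S in *.
        pose proof (r_cst_lt _ _ Hd'); lra. }
      specialize (Hslub _ Hub); lra. }
    apply (r_shift_le _ _ t') in Hbelow; auto.
    unfold shift, cst in Hbelow; replace (s + t - t' + t') with (s + t) in Hbelow by ring.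
    exact Hbelow.
  - apply (no_shift_gap (cst s) X); auto; intros t t' Htt'.
    assert (Habove : r X <= r (cst (s + t' - t))).
    { destruct (Rlt_or_le (r (cst (s + t' - t))) (r X)) as [Hn|]; auto.
      specialize (Hs _ (Rlt_le _ _ Hn)); lra. }
    apply (r_shift_le _ _ t) in Habove; auto.
    unfold shift, cst in Habove; replace (s + t' - t + t) with (s + t') in Habove by ring.
    exact Habove.
Qed.

Definition cert_eq (X : Omega -> R) : R :=
  epsilon (inhabits 0) (fun c => r X = r (cst c)).

Lemma cert_eq_spec X : XA A X -> r X = r (cst (cert_eq X)).
Proof.
  intros HX; apply (epsilon_spec (inhabits 0) (fun c => r X = r (cst c))).
  apply certainty_equivalent, HX.
Qed.

Lemma cert_eq_num_rep : num_rep A le cert_eq.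
Proof.
  intros X Y HX HY.
  rewrite (Hr X Y HX HY), (cert_eq_spec X HX), (cert_eq_spec Y HY).
  apply r_cst_le_iff.
Qed.

Lemma cert_eq_ordinal X : XA A X -> forall phi, incr_cont phi ->
  cert_eq (fun w => phi (X w)) = phi (cert_eq X).
Proof.
  intros HX phi Hphi.
  pose proof (XA_comp_increasing A HA X phi (proj1 Hphi) HX) as HpX.
  pose proof (cert_eq_spec X HX) as Hc.
  assert (Hup : le (fun w => phi (X w)) (cst (phi (cert_eq X))))
    by (apply (Hinv X (cst (cert_eq X))); auto; apply Hr; auto; lra).
  assert (Hdown : le (cst (phi (cert_eq X))) (fun w => phi (X w)))
    by (apply (Hinv (cst (cert_eq X)) X); auto; apply Hr; auto; lra).
  apply Hr in Hup, Hdown; auto.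
  apply r_cst_inj; rewrite <- (cert_eq_spec _ HpX); lra.
Qed.

End CertaintyEquivalent.

Lemma ordinal_rep_invariant {Omega : Type} (A : (Omega -> Prop) -> Prop)
  (HA : is_algebra A) (le : (Omega -> R) -> (Omega -> R) -> Prop)
  (Rep : (Omega -> R) -> R) :
  num_rep A le Rep ->
  (forall X, XA A X -> forall phi, incr_cont phi -> Rep (fun w => phi (X w)) = phi (Rep X)) ->
  forall X Y, XA A X -> XA A Y -> forall phi, incr_cont phi ->
    le X Y -> le (fun w => phi (X w)) (fun w => phi (Y w)).
Proof.
  intros HRep Hord X Y HX HY phi Hphi HXY.
  apply HRep; try apply (XA_comp_increasing A HA _ phi (proj1 Hphi)); auto.
  rewrite !Hord by auto.
  apply Hphi, HRep; auto.
Qed.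

Theorem proposition2 (Omega : Type) (Hne : inhabited Omega)
  (A : (Omega -> Prop) -> Prop) (HA : is_algebra A)
  (le : (Omega -> R) -> (Omega -> R) -> Prop)
  (Htot : total_preorder_on A le)
  (Hincr : strict le (cst 0) (cst 1))
  (Hrep : exists Rep : (Omega -> R) -> R, num_rep A le Rep) :
  (forall X Y : Omega -> R, XA A X -> XA A Y ->
     forall phi : R -> R, incr_cont phi ->
       le X Y -> le (fun w => phi (X w)) (fun w => phi (Y w)))
  <->
  (exists Rep : (Omega -> R) -> R, num_rep A le Rep /\
     forall X : Omega -> R, XA A X ->
       forall phi : R -> R, incr_cont phi ->
         Rep (fun w => phi (X w)) = phi (Rep X)).
Proof.
  destruct Hrep as [r Hr]; split.
  - intros Hinv; exists (cert_eq r); split.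
    + exact (cert_eq_num_rep A HA le r Hr Hincr Hinv).
    + exact (cert_eq_ordinal A HA le r Hr Hincr Hinv).
  - intros [Rep [HRep Hord]]; exact (ordinal_rep_invariant A HA le Rep HRep Hord).
Qed.
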